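(* Let $r,n,\delta\ge 2$ be natural numbers, let $m := \max\{\binom{rn-1}{r-1}n^2, \delta\}$ and $N := \binom{m-1}{n-1}$. Let $G$ be the graph with vertices $v_{i,j,k}$ for $i\in[n]$, $j\in[N]$, $k\in[m]$, and vertices $s_{i,X}$ for $i\in[n]$ and $X\subseteq[m]$ with $|X|=n$, whose edges are: $v_{i,j,k}v_{i',j',k'}$ whenever $i\neq i'$ and $k=k'$; and $s_{i,X}v_{i,j,k}$ whenever $k\in X$ (for all $j\in[N]$). Then $\gamma(G)=n$.
   Context: $[t]=\{1,\dots,t\}$. There are no other edges in $G$ than those listed. A set $D\subseteq V(G)$ is a total dominating set of $G$ if every vertex of $V(G)$ is adjacent to some vertex of $D$. $\gamma(G):=\min\{\chi(G[D]) : D \text{ a total dominating set of } G\}$, where $\chi$ is the chromatic number and $G[D]$ the induced subgraph. *)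

From mathcomp Require Import all_boot.
Set Implicit Arguments. Unset Strict Implicit. Unset Printing Implicit Defensive.

Section GraphDefs.
Variable T : finType.
Variable e : rel T.

Definition total_dominating (D : {set T}) : bool :=
  [forall x, [exists y in D, e x y]].

Definition colorable (D : {set T}) (k : nat) : bool :=
  [exists f : {ffun T -> 'I_k},
     [forall x in D, forall y in D, e x y ==> (f x != f y)]].

(* chromatic number of G[D]: least k admitting a proper k-colouring
   (for a loopless graph some k <= #|T| always works) *)
Definition chi (D : {set T}) : nat :=
  \big[minn/#|T|]_(k < #|T|.+1 | colorable D k) k.

(* gamma(G) = min { chi(G[D]) : D total dominating set of G }
   (the default #|T| is only used if no total dominating set exists) *)
Definition gamma : nat :=
  \big[minn/#|T|]_(D : {set T} | total_dominating D) chi D.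
End GraphDefs.

(* The graph G of the statement, indices are 0-based:
   [n] ~ 'I_n, [N] ~ 'I_N, [m] ~ 'I_m. *)
Definition mG (r n delta : nat) : nat :=
  maxn ('C(r * n - 1, r - 1) * n ^ 2) delta.
Definition NG (r n delta : nat) : nat := 'C(mG r n delta - 1, n - 1).

Definition Gvert (r n delta : nat) : finType :=
  (('I_n * 'I_(NG r n delta) * 'I_(mG r n delta))
   + ('I_n * {X : {set 'I_(mG r n delta)} | #|X| == n}))%type.

Definition Gadj (r n delta : nat) : rel (Gvert r n delta) :=
  fun a b =>
    match a, b with
    | inl (i, j, k), inl (i', j', k') => (i != i') && (k == k')
    | inr (i, X), inl (i', j', k') => (i == i') && (k' \in val X)
    | inl (i, j, k), inr (i', X) => (i == i') && (k \in val X)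
    | inr _, inr _ => false
    end.

From mathcomp Require Import all_boot.
From mathcomp Require Import zify.

Set Implicit Arguments.
Unset Strict Implicit.
Unset Printing Implicit Defensive.

(* For a total dominating set D and a row i, the vertex s_{i,X} is dominated
   only through some v_{i,j,k} in D with k in X; hence fewer than n columns k
   carry no vertex of D in row i.  Removing these at most n(n-1) < m columns
   leaves a column k meeting D in every row, and the n vertices of D found in
   column k form a clique, so chi(G[D]) >= n.  Conversely the set of all
   vertices v_{i,j,k} is total dominating and is properly coloured by i. *)

Lemma card_bigcup_leq (T I : finType) (A : I -> {set T}) :
  #|\bigcup_i A i| <= \sum_i #|A i|.
Proof.
apply: (big_ind2 (fun (S : {set T}) k => #|S| <= k)) => //.
- by rewrite cards0.
- by move=> S1 k1 S2 k2 le1 le2; rewrite cardsU; lia.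
Qed.

Lemma exists_subset_card (T : finType) (A : {set T}) k :
  k <= #|A| -> exists2 B : {set T}, B \subset A & #|B| = k.
Proof.
move=> le_kA; exists [set x in take k (enum A)].
- by apply/subsetP => x; rewrite inE => /mem_take; rewrite mem_enum.
- rewrite cardsE (card_uniqP _) ?take_uniq ?enum_uniq //.
  by rewrite size_takel // -cardE.
Qed.

Lemma geq_bigmin_cond (I : finType) (P : pred I) (F : I -> nat) d i0 :
  P i0 -> \big[minn/d]_(i | P i) F i <= F i0.
Proof.
move=> Pi0; have : i0 \in index_enum I by rewrite mem_index_enum.
elim: (index_enum I) => [//|j s IHs].
rewrite inE big_cons => /predU1P [<-|/IHs].
- by rewrite Pi0 geq_minl.
- by case: (P j) => // le_F; apply: leq_trans (geq_minr _ _) le_F.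
Qed.

Section ChromaticDomination.

Variables (T : finType) (e : rel T).

Lemma chi_leq_card (D : {set T}) : chi e D <= #|T|.
Proof.
apply: (big_ind (fun k => k <= #|T|)) => // [a b le_aT _ | k _].
- by rewrite geq_min le_aT.
- by rewrite -ltnS.
Qed.

Lemma chi_leq (D : {set T}) k : colorable e D k -> chi e D <= k.
Proof.
move=> colk; have [le_kT | lt_Tk] := leqP k #|T|; last first.
  exact: leq_trans (chi_leq_card D) (ltnW lt_Tk).
rewrite /chi; exact: (@geq_bigmin_cond _ _ _ _ (Ordinal (le_kT : k < #|T|.+1))).
Qed.

Lemma clique_leq_chi (D : {set T}) n (f : 'I_n -> T) :
  irreflexive e -> (forall i, f i \in D) ->
  (forall i i', i != i' -> e (f i) (f i')) -> n <= chi e D.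
Proof.
move=> irr_e fD f_clique.
have f_inj : injective f.
  move=> i i' eq_f; apply/eqP; apply: contraT => /f_clique.
  by rewrite eq_f irr_e.
have le_nT : n <= #|T| by rewrite -[n]card_ord; apply: leq_card f_inj.
apply: (big_ind (fun k => n <= k)) => // [a b le_na|[k _] /=].
  by rewrite leq_min le_na.
case/existsP=> c /forallP c_proper; rewrite -[n]card_ord -[k]card_ord.
apply: (@leq_card _ _ (fun i => c (f i))) => i i' eq_c; apply/eqP.
apply: contraT => /f_clique adj.
move: (c_proper (f i)); rewrite fD => /forallP /(_ (f i')).
by rewrite fD adj eq_c eqxx.
Qed.

Lemma gamma_leq (D : {set T}) : total_dominating e D -> gamma e <= chi e D.
Proof. exact: geq_bigmin_cond. Qed.

Lemma leq_gamma n :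
  (exists D, total_dominating e D) ->
  (forall D, total_dominating e D -> n <= chi e D) -> n <= gamma e.
Proof.
move=> [D0 tdD0] le_chi.
have le_nT : n <= #|T| := leq_trans (le_chi D0 tdD0) (chi_leq_card D0).
apply: (big_ind (fun k => n <= k)) => // a b le_na.
by rewrite leq_min le_na.
Qed.

End ChromaticDomination.

Section GraphG.

Variables r n delta : nat.
Hypothesis n_gt1 : 1 < n.

Local Notation m := (mG r n delta).
Local Notation N := (NG r n delta).
Local Notation V := (Gvert r n delta).
Local Notation G := (@Gadj r n delta).

Lemma sqrn_leq_mG : n ^ 2 <= m.
Proof.
apply: leq_trans (leq_maxl _ delta); rewrite leq_pmull // bin_gt0; nia.
Qed.

Lemma NG_gt0 : 0 < N.
Proof. by rewrite bin_gt0; have := sqrn_leq_mG; nia. Qed.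

Lemma Gadj_irrefl : irreflexive G.
Proof. by case=> [[[i j] k]|[i X]] //=; rewrite eqxx. Qed.

Definition row_columns (D : {set V}) (i : 'I_n) : {set 'I_m} :=
  [set k | [exists j, (inl (i, j, k) : V) \in D]].

Lemma card_row_columnsC D i :
  total_dominating G D -> #|~: row_columns D i| < n.
Proof.
move=> tdD; rewrite ltnNge; apply/negP.
case/exists_subset_card => X subX /eqP cardX.
move/forallP: tdD => /(_ (inr (i, exist _ X cardX))) /existsP [y /andP [yD]].
case: y yD => [[[i' j] k]|//] vD /= /andP [/eqP eq_i kX].
move/subsetP: subX => /(_ k kX).
by rewrite !inE => /existsP; apply; exists j; rewrite eq_i.
Qed.

Lemma common_column D :
  total_dominating G D -> exists k, forall i, k \in row_columns D i.
Proof.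
move=> tdD; pose U := \bigcup_i ~: row_columns D i.
have ltUm : #|U| < m.
  apply: leq_ltn_trans (card_bigcup_leq _) _.
  apply: (@leq_ltn_trans (\sum_(i < n) n.-1)).
    by apply: leq_sum => i _; rewrite -ltnS prednK ?card_row_columnsC //; lia.
  rewrite sum_nat_const card_ord; have := sqrn_leq_mG; nia.
have /card_gt0P [k kU] : 0 < #|~: U| by have := cardsC U; rewrite card_ord; lia.
exists k => i; move: kU; rewrite inE; apply: contraR => kC.
by apply/bigcupP; exists i; rewrite // in_setC.
Qed.

Lemma leq_chi_total_dominating D : total_dominating G D -> n <= chi G D.
Proof.
move=> tdD; have [k k_common] := common_column tdD.
have /fin_all_exists [J JD] : forall i, exists j, (inl (i, j, k) : V) \in D.
  by move=> i; move: (k_common i); rewrite inE => /existsP.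
apply: (@clique_leq_chi _ _ D n (fun i => inl (i, J i, k))) => //.
  exact: Gadj_irrefl.
by move=> i i' ne_i /=; rewrite ne_i eqxx.
Qed.

Definition v_vertices : {set V} := [set x | if x is inl _ then true else false].

Lemma total_dominating_v_vertices : total_dominating G v_vertices.
Proof.
pose j0 : 'I_N := Ordinal NG_gt0.
apply/forallP => [[[[i j] k]|[i [X cardX]]]]; apply/existsP.
- have [i' ne_i'] : exists i' : 'I_n, i' != i.
    have [-> | ne] := eqVneq i (Ordinal (ltnW n_gt1)).
      by exists (Ordinal n_gt1).
    by exists (Ordinal (ltnW n_gt1)); rewrite eq_sym.
  by exists (inl (i', j, k)); rewrite inE /= eq_sym ne_i' eqxx.
- have /card_gt0P [k kX] : 0 < #|X| by rewrite (eqP cardX); lia.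
  by exists (inl (i, j0, k)); rewrite inE /= eqxx.
Qed.

Lemma colorable_v_vertices : colorable G v_vertices n.
Proof.
apply/existsP.
exists [ffun x : V => match x with inl (i, _, _) | inr (i, _) => i end].
apply/forall_inP => x; rewrite inE; case: x => [[[i j] k] _|//].
apply/forall_inP => y; rewrite inE; case: y => [[[i' j'] k'] _|//].
by rewrite /= !ffunE; apply/implyP => /andP [].
Qed.

End GraphG.

Theorem lemma2p4 (r n delta : nat) (hr : 2 <= r) (hn : 2 <= n) (hd : 2 <= delta) :
  gamma (@Gadj r n delta) = n.
Proof.
have tdV := total_dominating_v_vertices r delta hn.
apply/anti_leq/andP; split.
- apply: leq_trans (gamma_leq tdV) _.
  exact: chi_leq (colorable_v_vertices r n delta).
- apply: leq_gamma; first by exists (v_vertices r n delta).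
  exact: leq_chi_total_dominating.
Qed.
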